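(* Let $A_n=1$ if $n=2^{k+1}-2$ for some integer $k\ge 0$ and $A_n=0$ otherwise, and let $D(n)=\det\left(A_{i+j}\right)_{i,j=0}^{n-1}$ for $n\ge 1$, $D(0)=1$. For $n\ge 0$ with binary expansion $n=[\varepsilon_k\cdots\varepsilon_1\varepsilon_0]_2$ (digits $\varepsilon_i\in\{0,1\}$, with $\varepsilon_i=0$ for $i>k$), let $\delta(n)$ be the number of indices $i\ge 1$ with $\varepsilon_{i+1}\varepsilon_i=10$ (i.e. $\varepsilon_{i+1}=1,\varepsilon_i=0$), plus $1$ if $\varepsilon_1\varepsilon_0=11$ (i.e. $\varepsilon_1=\varepsilon_0=1$). Then for all $n\ge 0$, $$D(n)=(-1)^{\delta(n)}.$$
   Context: Equivalently $A_n=a_{n+1}$ where $a_m=1$ if $m+1$ is a power of $2$ and $a_m=0$ otherwise. For example $\delta(3)=1$, $\delta(4)=1$, $\delta(6)=0$, $\delta(15)=1$. *)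

From mathcomp Require Import all_boot all_order all_algebra.
Set Implicit Arguments. Unset Strict Implicit. Unset Printing Implicit Defensive.
Import GRing.Theory Num.Theory.

(* A n = 1 if n = 2^(k+1) - 2 for some k >= 0, else 0.  Any such k satisfies
   k <= n (since 2^(k+1) - 2 >= k), so the search over k in [0, n] (iota 0 n.+1) is exhaustive. *)
Definition is_A (n : nat) : bool :=
  has (fun k => n == 2 ^ k.+1 - 2) (iota 0 n.+1).

Definition A (n : nat) : int := if is_A n then 1%R else 0%R.

(* Hankel determinant D(n) = det (A_{i+j})_{i,j=0}^{n-1}; for n = 0 the
   determinant of the empty matrix is 1, matching D(0) = 1. *)
Definition D (n : nat) : int := \det (\matrix_(i < n, j < n) A (i + j)).

Definition bit (i n : nat) : bool := odd (n %/ 2 ^ i).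

(* delta n = #{ i >= 1 : eps_{i+1} = 1, eps_i = 0 } + [eps_1 = eps_0 = 1].
   Digits eps_i vanish for i > n, so indices i in [1, n] cover all
   possible occurrences. *)
Definition delta (n : nat) : nat :=
  (\sum_(1 <= i < n.+1) (bit i.+1 n && ~~ bit i n)) + (bit 1 n && bit 0 n).

From mathcomp Require Import all_boot all_order all_algebra zify.
From mathcomp Require Import fingroup perm.
Set Implicit Arguments. Unset Strict Implicit. Unset Printing Implicit Defensive.
Import GRing.Theory Num.Theory.
Local Open Scope ring_scope.

(* Listing the even indices before the odd ones permutes the rows and columns
   of a Hankel matrix (f_(i+j)) into four Hankel blocks built from f_2m,
   f_(2m+1) and f_(2m+2).  Since A vanishes at odd indices and A_(2m+2) = A_m,
   this gives D(p + q) = Deven(p) D(q) for q <= p <= q + 1, where Deven is the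
   Hankel determinant of (A_2m).  The terms A_(4m+4) vanish, so the same
   reordering gives Deven(2q) = (-1)^q Deven(q)^2 and, after eliminating the
   corner entry A_0 = 1, Deven(2q+1) = (-1)^q D(q)^2.  Hence
   Deven(n) = (-1)^(n/2) and
   D(n) = (-1)^((n+1)/4) D(n/2) (integer division), which is exactly the
   recursion satisfied by (-1)^delta(n). *)

Section BlockDeterminants.
Variable R : comPzRingType.

Lemma det_mxsub_inj n (g : 'I_n -> 'I_n) (M : 'M[R]_n) :
  injective g -> \det (mxsub g g M) = \det M.
Proof.
move=> g_inj; set s := perm g_inj.
have -> : mxsub g g M = row_perm s (col_perm s M).
  by apply/matrixP => i j; rewrite !mxE !permE.
rewrite row_permE col_permE !det_mulmx !det_perm odd_permV.
by rewrite mulrCA -expr2 sqrr_sign mulr1.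
Qed.

Lemma det_block_antidiag1 p : \det (block_mx 0 1%:M 1%:M 0 : 'M[R]_(p + p)) = (-1) ^+ p.
Proof.
have -> : (block_mx 0 1%:M 1%:M 0 : 'M[R]_(p + p)) =
  block_mx 1%:M 1%:M 0 1%:M *m block_mx 1%:M 0 (-1%:M) 1%:M *m
  block_mx 1%:M 1%:M 0 1%:M *m block_mx (-1%:M) 0 0 1%:M.
  rewrite !mulmx_block !(mul1mx, mulmx1, mul0mx, mulmx0, add0r, addr0, mulNmx, mulmxN).
  by rewrite subrr addNr add0r oppr0 opprK.
rewrite !det_mulmx !det_ublock det_lblock !det1 -(raddfN (@scalar_mx _ p)) det_scalar.
by rewrite !mul1r mulr1.
Qed.

Lemma det_block_ul0 p (M N Y : 'M[R]_p) :
  \det (block_mx 0 M N Y) = (-1) ^+ p * (\det M * \det N).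
Proof.
have swap : block_mx 0 M N Y *m block_mx 0 1%:M 1%:M 0 = block_mx M 0 Y N.
  by rewrite mulmx_block !(mul1mx, mulmx1, mul0mx, mulmx0, add0r, addr0).
have := congr1 determinant swap; rewrite det_mulmx det_block_antidiag1 det_lblock => <-.
by rewrite mulrCA -expr2 sqrr_sign mulr1.
Qed.

Lemma det_block_dr0 p (X M N : 'M[R]_p) :
  \det (block_mx X M N 0) = (-1) ^+ p * (\det M * \det N).
Proof.
have swap : block_mx X M N 0 *m block_mx 0 1%:M 1%:M 0 = block_mx M X 0 N.
  by rewrite mulmx_block !(mul1mx, mulmx1, mul0mx, mulmx0, add0r, addr0).
have := congr1 determinant swap; rewrite det_mulmx det_block_antidiag1 det_ublock => <-.
by rewrite mulrCA -expr2 sqrr_sign mulr1.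
Qed.

Lemma det_block_pivot1 k (u : 'M[R]_(1, k)) (v : 'M[R]_(k, 1)) (K : 'M[R]_k) :
  \det (block_mx 1%:M u v K) = \det (K - v *m u).
Proof.
have elim_col :
    block_mx 1%:M 0 v 1%:M *m block_mx 1%:M u 0 (K - v *m u) = block_mx 1%:M u v K.
  rewrite mulmx_block !(mul1mx, mulmx1, mul0mx, mulmx0, add0r, addr0).
  by rewrite addrC subrK.
by rewrite -elim_col det_mulmx det_lblock det_ublock !det1 !mul1r.
Qed.

End BlockDeterminants.

Definition hankel (R : Type) (f : nat -> R) m n : 'M[R]_(m, n) :=
  \matrix_(i < m, j < n) f (i + j)%N.

Lemma eq_hankel (R : Type) (g h : nat -> R) m n : g =1 h -> hankel g m n = hankel h m n.
Proof. by move=> gh; apply/matrixP => i j; rewrite !mxE gh. Qed.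

(* The default [i] of [insubd] is only reached when p and q are unbalanced. *)
Definition unshuffle p q (i : 'I_(p + q)) : 'I_(p + q) :=
  insubd i (if i < p then i.*2 else (i - p).*2.+1)%N.
Arguments unshuffle : clear implicits.

Section Unshuffle.
Variables p q : nat.
Hypothesis pq_balanced : (q <= p <= q.+1)%N.

Lemma val_unshuffle i :
  val (unshuffle p q i) = (if i < p then i.*2 else (i - p).*2.+1)%N.
Proof.
rewrite val_insubd; have := ltn_ord i; case: ifP => //; case: ifP => //; lia.
Qed.

Lemma unshuffle_inj : injective (unshuffle p q).
Proof.
move=> i j /(congr1 val); rewrite !val_unshuffle => e; apply/val_inj.
by move: e; case: ifP; case: ifP => /=; lia.
Qed.

Lemma unshuffle_lshift (a : 'I_p) : val (unshuffle p q (lshift q a)) = a.*2.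
Proof. by rewrite val_unshuffle /= ltn_ord. Qed.

Lemma unshuffle_rshift (b : 'I_q) : val (unshuffle p q (rshift p b)) = b.*2.+1.
Proof. by rewrite val_unshuffle /= ltnNge leq_addr addKn. Qed.

End Unshuffle.

Section HankelDeterminants.
Variables (R : comPzRingType) (f : nat -> R).

Lemma mxsub_unshuffle_hankel p q : (q <= p <= q.+1)%N ->
  mxsub (unshuffle p q) (unshuffle p q) (hankel f (p + q) (p + q)) =
  block_mx (hankel (fun m => f m.*2) p p) (hankel (fun m => f m.*2.+1) p q)
           (hankel (fun m => f m.*2.+1) q p) (hankel (fun m => f m.*2.+2) q q).
Proof.
move=> pq; apply/matrixP => i j; rewrite -[i]splitK -[j]splitK.
case: (split i) => a; case: (split j) => b;
  rewrite /= ?block_mxEul ?block_mxEur ?block_mxEdl ?block_mxEdr !mxE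
    ?unshuffle_lshift ?unshuffle_rshift //; congr f; lia.
Qed.

Lemma hankel_eq0 (g : nat -> R) m n : (forall k, g k = 0) -> hankel g m n = 0.
Proof. by move=> g0; apply/matrixP => i j; rewrite !mxE g0. Qed.

Lemma det_hankel_interleave p q : (q <= p <= q.+1)%N -> (forall m, f m.*2.+1 = 0) ->
  \det (hankel f (p + q) (p + q)) =
  \det (hankel (fun m => f m.*2) p p) * \det (hankel (fun m => f m.*2.+2) q q).
Proof.
move=> pq f_odd; rewrite -(det_mxsub_inj _ (unshuffle_inj pq)).
rewrite mxsub_unshuffle_hankel // [hankel _ p q]hankel_eq0 //.
by rewrite [hankel _ q p]hankel_eq0 // det_ublock.
Qed.

Lemma det_hankel_double q : (forall m, f m.*2.+2 = 0) ->
  \det (hankel f (q + q) (q + q)) =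
  (-1) ^+ q * \det (hankel (fun m => f m.*2.+1) q q) ^+ 2.
Proof.
have qq : (q <= q <= q.+1)%N by rewrite leqnn leqnSn.
move=> f_even; rewrite -(det_mxsub_inj _ (unshuffle_inj qq)).
rewrite mxsub_unshuffle_hankel // [hankel _ q q in X in block_mx _ _ _ X]hankel_eq0 //.
by rewrite det_block_dr0 expr2.
Qed.

(* 'I_(q.+1 + q) and 'I_(1 + (q + q)) are convertible; the second reading
   separates the index 0 from the even indices 2, 4, ..., 2q. *)
Lemma mxsub_unshuffle_hankel_succ q : f 0%N = 1 -> (forall m, f m.*2.+2 = 0) ->
  let g : 'I_(1 + (q + q)) -> 'I_(1 + (q + q)) := unshuffle q.+1 q in
  mxsub g g (hankel f (1 + (q + q)) (1 + (q + q))) =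
  block_mx 1%:M (row_mx 0 (hankel (fun m => f m.*2.+1) 1 q))
           (col_mx 0 (hankel (fun m => f m.*2.+1) q 1))
           (block_mx 0 (hankel (fun m => f m.*2.+3) q q)
                       (hankel (fun m => f m.*2.+3) q q) 0).
Proof.
move=> f0 f_even g.
have f_even_pos k : ~~ odd k -> (0 < k)%N -> f k = 0.
  by move=> k_even k_pos; have -> : k = (k./2.-1).*2.+2 by lia.
have qq : (q <= q.+1 <= q.+1)%N by rewrite leqnSn leqnn.
have val_g (i : 'I_(1 + (q + q))) :
    val (g i) = (if i < q.+1 then i.*2 else (i - q.+1).*2.+1)%N.
  exact: (val_unshuffle qq).
have g0 (a : 'I_1) : val (g (lshift _ a)) = 0%N.
  by rewrite val_g /= ord1.
have g_l (a : 'I_q) : val (g (rshift 1 (lshift q a))) = a.*2.+2.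
  by rewrite val_g /=; have := ltn_ord a; case: ifP; lia.
have g_r (b : 'I_q) : val (g (rshift 1 (rshift q b))) = b.*2.+1.
  by rewrite val_g /=; have := ltn_ord b; case: ifP; lia.
apply/matrixP => i j; rewrite -[i]splitK -[j]splitK.
case: (split i) => [a|i']; try (rewrite -[i']splitK; case: (split i') => a);
case: (split j) => [b|j']; try (rewrite -[j']splitK; case: (split j') => b);
rewrite /= ?(block_mxEul, block_mxEur, block_mxEdl, block_mxEdr,
             row_mxEl, row_mxEr, col_mxEu, col_mxEd) !mxE ?g0 ?g_l ?g_r;
  first [ by rewrite (ord1 a) (ord1 b) eqxx addn0 f0
        | have := ltn_ord a; have := ltn_ord b; move=> *;
          first [by congr f; lia | by apply: f_even_pos; lia] ].
Qed.

Lemma det_hankel_double_succ q : f 0%N = 1 -> (forall m, f m.*2.+2 = 0) ->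
  \det (hankel f (1 + (q + q)) (1 + (q + q))) =
  (-1) ^+ q * \det (hankel (fun m => f m.*2.+3) q q) ^+ 2.
Proof.
move=> f0 f_even; have qq : (q <= q.+1 <= q.+1)%N by rewrite leqnSn leqnn.
rewrite -(det_mxsub_inj _ (unshuffle_inj qq)) mxsub_unshuffle_hankel_succ //.
rewrite det_block_pivot1 mul_col_row !(mul0mx, mulmx0) opp_block_mx add_block_mx.
by rewrite !(oppr0, addr0, add0r) det_block_ul0 expr2.
Qed.

End HankelDeterminants.

Lemma is_AP n : reflect (exists k, n = 2 ^ k.+1 - 2)%N (is_A n).
Proof.
apply: (iffP hasP) => [[k _ /eqP ->]|[k ->]]; first by exists k.
exists k => //; rewrite mem_iota add0n.
have : (k.+1 < 2 ^ k.+1)%N by apply: ltn_expl.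
lia.
Qed.

Lemma A0 : A 0 = 1.
Proof. by rewrite /A; case: is_AP => // -[]; exists 0%N. Qed.

Lemma A_odd m : A m.*2.+1 = 0.
Proof.
rewrite /A; case: is_AP => // -[k]; rewrite expnS.
have : (0 < 2 ^ k)%N by rewrite expn_gt0.
lia.
Qed.

Lemma A_double_add2 m : A m.*2.+2 = A m.
Proof.
rewrite /A; case: is_AP => [[k hk]|hn]; case: is_AP => [[k' hk']|hn'] //.
- case: hn'; case: k hk => [|k]; first by lia.
  exists k; move: hk; rewrite !expnS.
  have : (0 < 2 ^ k)%N by rewrite expn_gt0.
  lia.
- case: hn; exists k'.+1; move: hk'; rewrite !expnS.
  have : (0 < 2 ^ k')%N by rewrite expn_gt0.
  lia.
Qed.

Definition Deven n : int := \det (hankel (fun m => A m.*2) n n).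

Lemma D_add p q : (q <= p <= q.+1)%N -> D (p + q) = Deven p * D q.
Proof.
move=> pq; rewrite /D /Deven (det_hankel_interleave pq A_odd).
by rewrite (eq_hankel _ _ A_double_add2).
Qed.

Lemma Deven_double q : Deven (q + q) = (-1) ^+ q * Deven q ^+ 2.
Proof.
rewrite /Deven det_hankel_double => [|m]; last by rewrite doubleS A_double_add2 A_odd.
by congr (_ * \det _ ^+ 2); apply: eq_hankel => m; rewrite doubleS A_double_add2.
Qed.

Lemma Deven_double_succ q : Deven (q + q).+1 = (-1) ^+ q * D q ^+ 2.
Proof.
rewrite /Deven (det_hankel_double_succ q) => [||m]; last 2 first.
- exact: A0.
- by rewrite doubleS A_double_add2 A_odd.
by congr (_ * \det _ ^+ 2); apply: eq_hankel => m; rewrite doubleS !A_double_add2.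
Qed.

Section Delta.
Local Open Scope nat_scope.

Definition bit10 i n : bool := bit i.+1 n && ~~ bit i n.

Lemma bit0 n : bit 0 n = odd n.
Proof. by rewrite /bit divn1. Qed.

Lemma bitS i n : bit i.+1 n = bit i n./2.
Proof. by rewrite /bit expnS divnMA -divn2. Qed.

Lemma bit10_small i n : n <= i -> bit10 i n = false.
Proof.
move=> ni; rewrite /bit10 /bit divn_small //.
by apply: leq_ltn_trans (ltn_expl _ (isT : 1 < 2)); rewrite leqW.
Qed.

Lemma sum_bit10_widen n m N : n <= N ->
  \sum_(m <= i < N) bit10 i n = \sum_(m <= i < n) bit10 i n.
Proof.
move=> nN; rewrite (big_nat_widen _ _ _ _ _ nN).
by rewrite [RHS]big_mkcond; apply: eq_bigr => i _; case: ltnP => // /bit10_small ->.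
Qed.

Lemma delta_sum n N : n <= N ->
  delta n = \sum_(1 <= i < N) bit10 i n + (bit 1 n && bit 0 n).
Proof. by move=> nN; rewrite (sum_bit10_widen _ nN) -(sum_bit10_widen _ (leqnSn n)). Qed.

Lemma delta_half n :
  delta n + (bit 2 n && bit 1 n) =
  delta n./2 + (bit 2 n && ~~ bit 1 n) + (bit 1 n && bit 0 n).
Proof.
have le_half : n./2 <= n.+1 by lia.
rewrite (delta_sum (leqW (leqnSn n))) (delta_sum le_half).
have -> : \sum_(1 <= i < n.+1) bit10 i n./2 = \sum_(2 <= i < n.+2) bit10 i n.
  by rewrite [RHS]big_add1; apply: eq_bigr => i _; rewrite /bit10 -!bitS.
rewrite big_ltn // -!bitS /bit10; lia.
Qed.

Lemma odd_delta n : odd (delta n) = odd ((uphalf n)./2 + delta n./2).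
Proof. by move: (delta_half n); rewrite uphalf_half !bitS !bit0; lia. Qed.

End Delta.

Lemma Deven_D_sign n : Deven n = (-1) ^+ n./2 /\ D n = (-1) ^+ delta n.
Proof.
elim/ltn_ind: n => n IH.
have Deven_n : Deven n = (-1) ^+ n./2.
  case: n IH => [|n] IH; first exact: det_mx00.
  have [q lt_q [-> | ->]] :
      exists2 q, (q < n.+1)%N & n.+1 = (q + q)%N \/ n.+1 = (q + q).+1.
    exists n.+1./2; first lia.
    by have := odd_double_half n.+1; case: odd => /= e; [right|left]; lia.
  - by rewrite Deven_double (IH q lt_q).1 sqrr_sign mulr1 addnn doubleK.
  - by rewrite Deven_double_succ (IH q lt_q).2 sqrr_sign mulr1; congr (_ ^+ _); lia.
split=> //; case: n IH Deven_n => [|n] IH Deven_n.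
  by rewrite /D det_mx00 /delta big_geq.
have Deven_up : Deven (uphalf n.+1) = (-1) ^+ (uphalf n.+1)./2.
  have [-> // | lt_up] : uphalf n.+1 = n.+1 \/ (uphalf n.+1 < n.+1)%N.
    by rewrite uphalf_half; lia.
  exact: (IH _ lt_up).1.
have split_n : n.+1 = (uphalf n.+1 + n.+1./2)%N by rewrite uphalf_half; lia.
have lt_half : (n.+1./2 < n.+1)%N by lia.
rewrite [in D _]split_n D_add ?Deven_up ?(IH _ lt_half).2;
  last by rewrite uphalf_half; lia.
by rewrite -exprD -signr_odd odd_delta signr_odd.
Qed.

Theorem corollary2p4 (n : nat) : D n = (-1) ^+ delta n.
Proof. exact: (Deven_D_sign n).2. Qed.
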